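(* Let $f\in F$. Then $\ell(x_0^{-1}f)<\ell(f)$ if and only if one of the following holds: (1) the reduced forest diagram of $x_0^{-1}f$ has smaller support than that of $f$; (2) the left space of $f$ has label pair $(L,L)$; (3) the left space of $f$ has label pair $(L,I)$ and the current tree of $f$ is trivial.
   Context: Thompson's group $F$ is realized as the group of all orientation-preserving piecewise-linear homeomorphisms $f$ of $\mathbb R$ with finitely many breakpoints, all breakpoints having dyadic rational coordinates, all slopes integral powers of $2$, and with $f(t)=t-m$ for all sufficiently negative $t$ and $f(t)=t-n$ for all sufficiently positive $t$, for some integers $m,n$. Products are compositions of functions: $fg=f\circ g$. The generators are $x_0(t)=t-1$ and $x_1(t)=t$ for $t\le 0$, $x_1(t)=t/2$ for $0\le t\le 2$, $x_1(t)=t-1$ for $t\ge 2$. A forest diagram for $x_0^{-1}f$ is obtained from one for $f$ by moving the top pointer one tree to the left. Forest diagrams: a binary forest is a sequence $(T_i)_{i\in\mathbb Z}$ of finite rooted binary trees (every node has $0$ or $2$ children; internal nodes are called carets; a trivial tree is a single leaf), all but finitely many trivial, together with a pointer marking $T_0$. Tree $T_i$ represents the interval $[i,i+1]$, each caret represents halving the interval of its node, and the leaves of the forest give a dyadic subdivision of $\mathbb R$. A forest diagram for $f$ is a pair of binary forests, the bottom (domain) forest with subdivision $\mathcal D$ and the top (range) forest with subdivision $\mathcal R$, such that $f$ maps each interval of $\mathcal D$ linearly onto an interval of $\mathcal R$; this matches the leaves of the two forests by an order-preserving bijection, so the two forests share one linearly ordered set of leaves (columns). A reduction deletes an opposing pair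 of carets, i.e. a top caret and a bottom caret both of whose children are leaves and which have the same two (matched) leaves. A forest diagram is reduced if no reduction is possible; every element of $F$ has a unique reduced forest diagram. The support of a forest diagram is the smallest set of consecutive columns containing all leaves of nontrivial trees of either forest and the leaves of the two trees marked by the two pointers. A space is a gap between two consecutive columns; the spaces in the support are the gaps between consecutive columns of the support. The current tree of $f$ is the tree of the top forest (of the reduced diagram) marked by the top pointer; the right (resp. left) space of $f$ is the space immediately to the right (resp. left) of the current tree. Labels: in each of the two forests separately (using that forest's own pointer), a space is interior if the leaves on both sides of it belong to the same tree and exterior otherwise; it lies immediately to the left of a caret $c$ of that forest if the leaf immediately to its right is the leftmost leaf descending from $c$. Each space of the support receives a label in each forest: $L$ if it is exterior and to the left of the tree marked by the pointer; otherwise $N$ if it lies immediately to the left of some caret; otherwise $R$ if it is exterior (hence to the right of the marked tree); otherwise $I$ (interior). A space thus has a label pair (top label, bottom label); spaces outside the support are unlabeled. Weights, by (top, bottom): $(L,L)=2$, $(L,N)=1$, $(L,R)=1$, $(L,I)=1$; $(N,L)=1$, $(N,N)=2$, $(N,R)=2$, $(N,I)=2$; $(R,L)=1$, $(R,N)=2$, $(R,R)=2$, $(R,I)=0$; $(I,L)=1$, $(I,N)=2$, $(I,R)=0$, $(I,I)=0$. For $f\in F$, $\ell(f)=\ell_0(f)+\ell_1(f)$, where $\ell_0(f)$ is the sum of the weights of the spaces in the support of the reduced forest diagram of $f$ and $\ell_1(f)$ is its total number of carets; $\ell(f)$ equals the word length of $f$ with respect to $\{x_0,x_1\}$. *)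

From mathcomp Require Import all_boot.
Set Implicit Arguments. Unset Strict Implicit. Unset Printing Implicit Defensive.

Inductive tree := Leaf | Node of tree & tree.

Definition is_trivial (t : tree) : bool := if t is Leaf then true else false.

Fixpoint nleaves (t : tree) : nat :=
  match t with Leaf => 1 | Node l r => nleaves l + nleaves r end.

Fixpoint ncarets (t : tree) : nat :=
  match t with Leaf => 0 | Node l r => (ncarets l + ncarets r).+1 end.

(* For each leaf (left to right): is it the leftmost leaf descending
   from some caret of the tree? *)
Fixpoint caret_flags (t : tree) : seq bool :=
  match t with
  | Leaf => [:: false]
  | Node l r => true :: (behead (caret_flags l) ++ caret_flags r)
  end.

(* Left-leaf positions (offset by [off]) of the carets both of whose
   children are leaves. *)
Fixpoint simple_carets (t : tree) (off : nat) : seq nat :=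
  match t with
  | Leaf => [::]
  | Node Leaf Leaf => [:: off]
  | Node l r => simple_carets l off ++ simple_carets r (off + nleaves l)
  end.

(* A finite window [T_a, ..., T_b] of a binary forest, as a list of   *)
(* trees; all trees outside the window are trivial.  Columns (leaves) *)
(* of the window are numbered 0, 1, ..., left to right.               *)
Definition forest := seq tree.

Definition forest_leaves (F : forest) : nat := sumn (map nleaves F).

Definition tree_start (F : forest) (i : nat) : nat := forest_leaves (take i F).

Definition tree_of_col (F : forest) : seq nat :=
  flatten [seq nseq (nleaves (nth Leaf F i)) i | i <- iota 0 (size F)].

Definition forest_caret_flags (F : forest) : seq bool :=
  flatten (map caret_flags F).

Definition forest_simple_carets (F : forest) : seq nat :=
  flatten [seq simple_carets (nth Leaf F i) (tree_start F i) | i <- iota 0 (size F)].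

Definition forest_carets (F : forest) : nat := sumn (map ncarets F).

(* Forest diagrams.  [bot] / [top] are windows of the bottom (domain)  *)
(* and top (range) forests, aligned so that their columns coincide:   *)
(* column k of the bottom window is matched with column k of the top  *)
(* window, and the (trivial) leaves outside the windows are matched   *)
(* order-preservingly.  [bptr] / [tptr] are the window indices of the *)
(* trees marked by the bottom / top pointer.                          *)
Record fdiag := FDiag { bot : forest; top : forest; bptr : nat; tptr : nat }.

Definition ncols (D : fdiag) : nat := forest_leaves (bot D).

Definition wf_fdiag (D : fdiag) : bool :=
  [&& forest_leaves (bot D) == forest_leaves (top D),
      bptr D < size (bot D) & tptr D < size (top D)].

(* reduced: no top caret and bottom caret, both with two leaf children,
   having the same two (matched) leaves *)
Definition reduced (D : fdiag) : bool :=
  ~~ has (fun c => c \in forest_simple_carets (top D)) (forest_simple_carets (bot D)).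

(* x0^{-1} f : move the top pointer one tree to the left (enlarging the
   windows by one trivial tree on the left if needed). *)
Definition x0inv (D : fdiag) : fdiag :=
  if tptr D is t.+1 then FDiag (bot D) (top D) (bptr D) t
  else FDiag (Leaf :: bot D) (Leaf :: top D) (bptr D).+1 0.

Definition col_marked (F : forest) (p c : nat) : bool :=
  let i := nth 0 (tree_of_col F) c in ~~ is_trivial (nth Leaf F i) || (i == p).

Definition supp_cols (D : fdiag) : seq nat :=
  [seq c <- iota 0 (ncols D) | col_marked (bot D) (bptr D) c || col_marked (top D) (tptr D) c].

Definition supp_min (D : fdiag) : nat := head 0 (supp_cols D).
Definition supp_max (D : fdiag) : nat := last 0 (supp_cols D).

(* the size of the support, measured by its number of spaces
   (= number of columns - 1) *)
Definition supp_size (D : fdiag) : nat := supp_max D - supp_min D.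

(* space number c = the gap between columns c and c+1 *)
Definition in_support (D : fdiag) (c : nat) : bool := supp_min D <= c < supp_max D.

Inductive lab := LabL | LabN | LabR | LabI.

Definition forest_label (F : forest) (p c : nat) : lab :=
  let tc := tree_of_col F in
  let exterior := nth 0 tc c != nth 0 tc c.+1 in
  if exterior && (c.+1 <= tree_start F p) then LabL
  else if nth false (forest_caret_flags F) c.+1 then LabN
  else if exterior then LabR
  else LabI.

(* (top label, bottom label) of a space; None if outside the support *)
Definition space_label (D : fdiag) (c : nat) : option (lab * lab) :=
  if in_support D c
  then Some (forest_label (top D) (tptr D) c, forest_label (bot D) (bptr D) c)
  else None.

Definition weight (tb : lab * lab) : nat :=
  match tb with
  | (LabL, LabL) => 2 | (LabL, LabN) => 1 | (LabL, LabR) => 1 | (LabL, LabI) => 1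
  | (LabN, LabL) => 1 | (LabN, LabN) => 2 | (LabN, LabR) => 2 | (LabN, LabI) => 2
  | (LabR, LabL) => 1 | (LabR, LabN) => 2 | (LabR, LabR) => 2 | (LabR, LabI) => 0
  | (LabI, LabL) => 1 | (LabI, LabN) => 2 | (LabI, LabR) => 0 | (LabI, LabI) => 0
  end.

Definition ell0 (D : fdiag) : nat :=
  sumn [seq weight (forest_label (top D) (tptr D) c, forest_label (bot D) (bptr D) c)
       | c <- index_iota (supp_min D) (supp_max D)].

Definition ell1 (D : fdiag) : nat := forest_carets (bot D) + forest_carets (top D).

Definition ell (D : fdiag) : nat := ell0 D + ell1 D.

Definition current_tree (D : fdiag) : tree := nth Leaf (top D) (tptr D).

Definition left_space_label (D : fdiag) : option (lab * lab) :=
  if tree_start (top D) (tptr D) is s.+1 then space_label D s else None.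

(* Moving the top pointer one tree to the left changes the labelled diagram only at the
   boundary between the current tree and its left neighbour, say between columns k and k.+1.
   No caret changes; the support can only gain column k (now in the marked tree) and lose
   column k.+1; and the only label that changes is the top label of space k, the left
   space of f, which turns from L into R (trivial current tree) or N (otherwise).  Hence the weighted sum over the support decreases exactly when the support
   shrinks or space k lies in the support with a weight dropping from (L, b) to (R, b) or
   (N, b), which by the weight table means b = L, or b = I and the current tree is trivial.
   When the pointer is at the leftmost tree of the window, a trivial tree is first added
   on the left of both forests. *)

From mathcomp Require Import all_boot zify.
Set Implicit Arguments. Unset Strict Implicit. Unset Printing Implicit Defensive.

(* [supp_min D] and [supp_max D] unfold to these, with [P] the marked-column predicate. *)
Definition first_below n (P : pred nat) : nat := head 0 (filter P (iota 0 n)).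
Definition last_below n (P : pred nat) : nat := last 0 (filter P (iota 0 n)).

Lemma first_below_eq n (P : pred nat) m :
  m < n -> P m -> (forall c, c < m -> ~~ P c) -> first_below n P = m.
Proof.
move=> lt_mn Pm below_m; rewrite /first_below.
have -> : n = m + (n - m.+1).+1 by lia.
rewrite iotaD filter_cat add0n.
rewrite (@eq_in_filter _ _ pred0) ?filter_pred0 /= ?Pm // => c.
by rewrite mem_iota add0n => /below_m /negbTE.
Qed.

Lemma last_below_eq n (P : pred nat) m :
  m < n -> P m -> (forall c, m < c < n -> ~~ P c) -> last_below n P = m.
Proof.
move=> lt_mn Pm above_m; rewrite /last_below.
have -> : n = m.+1 + (n - m.+1) by lia.
rewrite iotaD filter_cat add0n.
have -> : filter P (iota m.+1 (n - m.+1)) = [::].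
  rewrite (@eq_in_filter _ _ pred0) ?filter_pred0 // => c.
  by rewrite mem_iota => lt_c; apply/negbTE/above_m; lia.
by rewrite cats0 -addn1 iotaD filter_cat /= Pm last_cat.
Qed.

Lemma first_belowP n (P : pred nat) c0 : c0 < n -> P c0 ->
  P (first_below n P) /\ forall c, c < n -> P c -> first_below n P <= c.
Proof.
move=> lt_c0n Pc0.
have exP : exists c, (c < n) && P c by exists c0; rewrite lt_c0n Pc0.
case: (ex_minnP exP) => m /andP[lt_mn Pm] min_m.
rewrite (@first_below_eq n P m) //; last first.
  by move=> c lt_cm; apply/negP=> Pc; have := min_m c; rewrite Pc andbT; lia.
by split=> // c lt_cn Pc; apply: min_m; rewrite lt_cn.
Qed.

Lemma last_belowP n (P : pred nat) c0 : c0 < n -> P c0 ->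
  [/\ P (last_below n P), last_below n P < n &
      forall c, c < n -> P c -> c <= last_below n P].
Proof.
move=> lt_c0n Pc0.
have exP : exists c, (c < n) && P c by exists c0; rewrite lt_c0n Pc0.
have ubP c : (c < n) && P c -> c <= n by case/andP=> /ltnW.
case: (ex_maxnP exP ubP) => m /andP[lt_mn Pm] max_m.
rewrite (@last_below_eq n P m) //; last first.
  by move=> c /andP[lt_mc lt_cn]; apply/negP=> Pc; have := max_m c; rewrite lt_cn Pc; lia.
by split=> // c lt_cn Pc; apply: max_m; rewrite lt_cn.
Qed.

Section MarkShift.
Variables (n k : nat) (P P' : pred nat).
Hypotheses (lt_k1n : k.+1 < n) (Pk1 : P k.+1) (P'k : P' k).
Hypothesis eqPP' : forall c, c < n -> c != k -> c != k.+1 -> P c = P' c.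

Lemma first_below_shift : first_below n P' = minn (first_below n P) k.
Proof.
have [P'm' min_m'] := first_belowP (ltnW lt_k1n) P'k.
have [Pm min_m] := first_belowP lt_k1n Pk1.
have m'_le_k := min_m' k (ltnW lt_k1n) P'k.
apply/eqP; rewrite eqn_leq; apply/andP; split.
  case: (leqP (first_below n P) k) => [le_mk | _]; last exact: m'_le_k.
  case: (eqVneq (first_below n P) k) => [-> // | ne_mk].
  by apply: min_m'; [lia | rewrite -eqPP' //; apply/eqP; lia].
case: (ltnP (first_below n P') k) => [lt_m'k | ]; last by lia.
have : first_below n P <= first_below n P'.
  by apply: min_m; [lia | rewrite eqPP' //; apply/eqP; lia].
lia.
Qed.

Lemma last_below_shift :
  k <= last_below n P' <= last_below n P /\
  (k.+2 <= last_below n P -> last_below n P' = last_below n P).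
Proof.
have [P'M' lt_M'n max_M'] := last_belowP (ltnW lt_k1n) P'k.
have [PM lt_Mn max_M] := last_belowP lt_k1n Pk1.
have k1_le_M := max_M _ lt_k1n Pk1.
have le_M'M : last_below n P' <= last_below n P.
  case: (leqP (last_below n P') k.+1) => [|lt_k1M']; first lia.
  by apply: max_M => //; rewrite eqPP' //; apply/eqP; lia.
split; first by rewrite le_M'M andbT max_M' //; apply: ltnW.
move=> le_k2M; apply/eqP; rewrite eqn_leq le_M'M max_M' //.
by rewrite -eqPP' //; apply/eqP; lia.
Qed.

End MarkShift.

Lemma sum_window_ltP (w w' : nat -> nat) k m M m' M' :
  m <= k.+1 <= M -> m' = minn m k -> k <= M' <= M -> (k.+2 <= M -> M' = M) ->
  (forall c, c != k -> w' c = w c) -> 0 < w k ->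
  \sum_(m' <= c < M') w' c < \sum_(m <= c < M) w c <->
  M' - m' < M - m \/ m <= k < M /\ w' k < w k.
Proof.
move=> /andP[le_mk1 le_k1M] def_m' /andP[le_kM' le_M'M] M'_eq eq_ww' w_k_gt0.
have split_at_k (f : nat -> nat) a b : b <= M -> \sum_(a <= c < b) f c =
    (if a <= k < b then f k else 0) + \sum_(0 <= c < M | c != k) (if a <= c < b then f c else 0).
  move=> le_bM; rewrite (@big_nat_widenl _ _ _ a 0) // (@big_nat_widen _ _ _ 0 b M) //.
  by rewrite big_mkcond (bigD1_seq k) ?mem_index_iota ?iota_uniq.
rewrite (split_at_k w') // (split_at_k w) // [X in _ + X < _](_ : _ =
  \sum_(0 <= c < M | c != k) (if m <= c < M then w c else 0)).
  rewrite ltn_add2r; case: ifP; case: ifP; lia.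
apply: eq_bigr => c ne_ck; rewrite eq_ww' //.
by have -> : (m' <= c < M') = (m <= c < M) by lia.
Qed.

Lemma nleaves_gt0 t : 0 < nleaves t.
Proof. by elim: t => //= l + r; case: nleaves. Qed.

Lemma is_trivialE t : is_trivial t = (nleaves t == 1).
Proof. by case: t => //= l r; have := nleaves_gt0 l; have := nleaves_gt0 r; lia. Qed.

Lemma size_caret_flags t : size (caret_flags t) = nleaves t.
Proof.
elim: t => //= l IHl r IHr; rewrite size_cat size_behead IHl IHr.
by have := nleaves_gt0 l; lia.
Qed.

Lemma tree_of_col_cons t F :
  tree_of_col (t :: F) = nseq (nleaves t) 0 ++ map succn (tree_of_col F).
Proof.
rewrite /tree_of_col /= map_flatten -map_comp -[1]/(1 + 0) iotaDl -map_comp.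
by congr (_ ++ flatten _); apply: eq_map => i /=; rewrite map_nseq.
Qed.

Lemma size_tree_of_col F : size (tree_of_col F) = forest_leaves F.
Proof. by elim: F => //= t F IH; rewrite tree_of_col_cons size_cat size_nseq size_map IH. Qed.

Lemma tree_start0 F : tree_start F 0 = 0.
Proof. by rewrite /tree_start take0. Qed.

Lemma tree_start_cons t F i : tree_start (t :: F) i.+1 = nleaves t + tree_start F i.
Proof. by []. Qed.

Lemma tree_startS F i : i < size F ->
  tree_start F i.+1 = tree_start F i + nleaves (nth Leaf F i).
Proof.
elim: F i => [|t F IH] [|i] //= lt_iF.
  by rewrite tree_start_cons !tree_start0 addn0.
by rewrite !tree_start_cons IH // addnA.
Qed.

Lemma tree_start_le F i : tree_start F i <= forest_leaves F.
Proof.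
elim: F i => [|t F IH] [|i] //; rewrite ?tree_start0 //.
by rewrite tree_start_cons leq_add2l IH.
Qed.

Lemma nth_tree_of_col F i c : i < size F -> tree_start F i <= c < tree_start F i.+1 ->
  nth 0 (tree_of_col F) c = i.
Proof.
elim: F i c => [|t F IH] i c //= lt_iF.
rewrite tree_of_col_cons nth_cat size_nseq.
case: i lt_iF => [|i] lt_iF.
  by rewrite tree_start_cons !tree_start0 addn0 => /andP[_ lt_ct]; rewrite lt_ct nth_nseq lt_ct.
rewrite !tree_start_cons => /andP[le_c lt_c].
rewrite ifN; last by rewrite -leqNgt; apply: leq_trans le_c; apply: leq_addr.
rewrite (nth_map 0) ?(IH i) //; first lia.
by rewrite size_tree_of_col; have := tree_start_le F i.+1; lia.
Qed.

Lemma col_in_tree F c : c < forest_leaves F ->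
  exists2 i, i < size F & tree_start F i <= c < tree_start F i.+1.
Proof.
elim: F c => [|t F IH] c //=.
rewrite /forest_leaves /= -/(forest_leaves F) => lt_c.
case: (ltnP c (nleaves t)) => lt_ct.
  by exists 0 => //; rewrite tree_start0 tree_start_cons tree_start0 addn0.
case: (IH (c - nleaves t)); first lia.
by move=> i lt_iF bounds; exists i.+1 => //; rewrite !tree_start_cons; lia.
Qed.

Lemma nth_forest_caret_flags F i : i < size F ->
  nth false (forest_caret_flags F) (tree_start F i) = ~~ is_trivial (nth Leaf F i).
Proof.
elim: F i => [|t F IH] i //=.
rewrite /forest_caret_flags /= -/(forest_caret_flags F) nth_cat size_caret_flags.
case: i => [|i] lt_iF; first by rewrite tree_start0 nleaves_gt0; case: t.
by rewrite tree_start_cons ltnNge leq_addr /= addKn IH.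
Qed.

Section PointerStep.
Variables (F : forest) (q k : nat).
Hypotheses (lt_q1F : q.+1 < size F) (def_k : tree_start F q.+1 = k.+1).

Lemma pointer_step_bounds :
  [/\ tree_start F q <= k, k.+1 < tree_start F q.+2 & tree_start F q.+2 <= forest_leaves F].
Proof.
have := tree_startS (ltnW lt_q1F); have := tree_startS lt_q1F.
have := nleaves_gt0 (nth Leaf F q); have := nleaves_gt0 (nth Leaf F q.+1).
have := tree_start_le F q.+2; have := def_k; split; lia.
Qed.

Lemma tree_of_col_k : nth 0 (tree_of_col F) k = q.
Proof. by case: pointer_step_bounds => *; apply: nth_tree_of_col; lia. Qed.

Lemma tree_of_col_k1 : nth 0 (tree_of_col F) k.+1 = q.+1.
Proof. by case: pointer_step_bounds => *; apply: nth_tree_of_col => //; lia. Qed.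

Lemma forest_label_pointer_step (c : nat) : c != k -> forest_label F q c = forest_label F q.+1 c.
Proof.
move=> ne_ck; rewrite /forest_label; case: pointer_step_bounds => le_qk _ _.
set ext := _ != _; suff -> : ext && (c < tree_start F q) = ext && (c < tree_start F q.+1) by [].
have [lt_cq | le_qc] := ltnP c (tree_start F q).
  by rewrite def_k ltnS (leq_trans (ltnW lt_cq)).
rewrite andbF def_k; case: (ltnP c k.+1) => [lt_ck1 | _]; last by rewrite andbF.
by rewrite /ext !(@nth_tree_of_col F q) ?eqxx // ?def_k; lia.
Qed.

Lemma forest_label_pointerS_k : forest_label F q.+1 k = LabL.
Proof.
by rewrite /forest_label tree_of_col_k tree_of_col_k1 def_k (ltn_eqF (ltnSn q)) leqnn.
Qed.

Lemma forest_label_pointer_k :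
  forest_label F q k = if is_trivial (nth Leaf F q.+1) then LabR else LabN.
Proof.
case: pointer_step_bounds => le_qk _ _.
rewrite /forest_label tree_of_col_k tree_of_col_k1 (ltn_eqF (ltnSn q)) /=.
rewrite ltnNge le_qk /= -def_k nth_forest_caret_flags //.
by case: is_trivial.
Qed.

Lemma col_marked_pointer_step (c : nat) : c < forest_leaves F -> c != k -> c != k.+1 ->
  col_marked F q.+1 c = col_marked F q c.
Proof.
move=> lt_cF ne_ck ne_ck1; case: pointer_step_bounds => le_qk _ _.
case: (col_in_tree lt_cF) => i lt_iF bounds.
rewrite /col_marked (nth_tree_of_col lt_iF bounds).
have := tree_startS lt_iF; have := is_trivialE (nth Leaf F i).
case: (eqVneq i q.+1) => [def_i | ne_iq1] triv_i start_i1.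
  subst i; by rewrite (_ : is_trivial _ = false) // triv_i; lia.
case: (eqVneq i q) => [def_i | ne_iq]; last by [].
subst i; by rewrite (_ : is_trivial _ = false) // triv_i; lia.
Qed.

Lemma col_marked_pointerS_k1 : col_marked F q.+1 k.+1.
Proof. by rewrite /col_marked tree_of_col_k1 eqxx orbT. Qed.

Lemma col_marked_pointer_k : col_marked F q k.
Proof. by rewrite /col_marked tree_of_col_k eqxx orbT. Qed.

End PointerStep.

Lemma supp_pointer_step b F bp q k :
  forest_leaves b = forest_leaves F -> q.+1 < size F -> tree_start F q.+1 = k.+1 ->
  let D := FDiag b F bp q.+1 in let D' := FDiag b F bp q in
  [/\ supp_min D <= k.+1 <= supp_max D, supp_min D' = minn (supp_min D) k,
      k <= supp_max D' <= supp_max D &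
      k.+2 <= supp_max D -> supp_max D' = supp_max D].
Proof.
move=> leaves_eq lt_q1F def_k D D'.
have [_ lt_k1q2 le_q2F] := pointer_step_bounds lt_q1F def_k.
set P := fun c => col_marked b bp c || col_marked F q.+1 c.
set P' := fun c => col_marked b bp c || col_marked F q c.
have lt_k1n : k.+1 < forest_leaves b by rewrite leaves_eq; lia.
have Pk1 : P k.+1 by rewrite /P (col_marked_pointerS_k1 lt_q1F def_k) orbT.
have P'k : P' k by rewrite /P' (col_marked_pointer_k lt_q1F def_k) orbT.
have eqPP' c : c < forest_leaves b -> c != k -> c != k.+1 -> P c = P' c.
  by move=> lt_cn ne_ck ne_ck1; rewrite /P (col_marked_pointer_step lt_q1F def_k) // -leaves_eq.
have [_ min_m] := first_belowP lt_k1n Pk1.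
have [_ _ max_M] := last_belowP lt_k1n Pk1.
have [max_bounds max_shift] := last_below_shift lt_k1n Pk1 P'k eqPP'.
split=> //; last exact: first_below_shift lt_k1n Pk1 P'k eqPP'.
by apply/andP; split; [exact: min_m | exact: max_M].
Qed.

Lemma weight_pointer_step_ltP (lb : lab) (t : tree) :
  weight (if is_trivial t then LabR else LabN, lb) < weight (LabL, lb) <->
  lb = LabL \/ lb = LabI /\ t = Leaf.
Proof.
by case: lb; case: t => [|l r]; split=> /=; first [by left | by right | by [] | by case=> [|[]]].
Qed.

Lemma ell_x0inv_ltP_tptr_gt0 (D : fdiag) : wf_fdiag D -> 0 < tptr D ->
  (ell (x0inv D) < ell D) <->
  [\/ supp_size (x0inv D) < supp_size D,
      left_space_label D = Some (LabL, LabL)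
    | left_space_label D = Some (LabL, LabI) /\ current_tree D = Leaf].
Proof.
case: D => b F bp [//|q] /and3P[/eqP /= leaves_eq _ lt_q1F] _.
have [k def_k] : exists k, tree_start F q.+1 = k.+1.
  have := tree_startS (ltnW lt_q1F); have := nleaves_gt0 (nth Leaf F q).
  by exists (tree_start F q.+1).-1; lia.
have [window min_shift max_bounds max_shift] := supp_pointer_step bp leaves_eq lt_q1F def_k.
have weights_step c : c != k -> weight (forest_label F q c, forest_label b bp c) =
    weight (forest_label F q.+1 c, forest_label b bp c).
  by move=> ne_ck; rewrite (forest_label_pointer_step lt_q1F def_k).
have weight_k_gt0 : 0 < weight (forest_label F q.+1 k, forest_label b bp k).
  by rewrite (forest_label_pointerS_k lt_q1F def_k); case: forest_label.
rewrite /ell /ell1 ltn_add2r /ell0 !sumnE !big_map.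
apply: iff_trans (sum_window_ltP window min_shift max_bounds max_shift weights_step weight_k_gt0) _.
rewrite /left_space_label /current_tree /= def_k /space_label /in_support.
rewrite (forest_label_pointerS_k lt_q1F def_k) (forest_label_pointer_k lt_q1F def_k).
rewrite weight_pointer_step_ltP.
by case: (_ <= k < _); case: (forest_label b bp k); split; firstorder congruence.
Qed.

Definition pad_left (D : fdiag) : fdiag :=
  FDiag (Leaf :: bot D) (Leaf :: top D) (bptr D).+1 (tptr D).+1.

Lemma col_marked_pad_left F p c : c < forest_leaves F ->
  col_marked (Leaf :: F) p.+1 c.+1 = col_marked F p c.
Proof. by move=> lt_cF; rewrite /col_marked tree_of_col_cons /= (nth_map 0) ?size_tree_of_col. Qed.

Lemma forest_label_pad_left F p c : c.+1 < forest_leaves F ->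
  forest_label (Leaf :: F) p.+1 c.+1 = forest_label F p c.
Proof.
by move=> lt_c1F; rewrite /forest_label tree_of_col_cons /= !(nth_map 0) ?size_tree_of_col // ltnW.
Qed.

Lemma supp_cols_lt_ncols D c : c \in supp_cols D -> c < ncols D.
Proof. by rewrite mem_filter mem_iota => /andP[_ /andP[]]. Qed.

Section PadLeft.
Variable D : fdiag.
Hypothesis leaves_eq : forest_leaves (bot D) = forest_leaves (top D).

Lemma supp_cols_pad_left : supp_cols (pad_left D) = map succn (supp_cols D).
Proof.
rewrite /supp_cols /ncols /= /forest_leaves /= add0n -/(forest_leaves _).
rewrite -[1]/(1 + 0) iotaDl filter_map; congr map; apply: eq_in_filter => c.
by rewrite mem_iota add0n => lt_c /=; rewrite !col_marked_pad_left // -leaves_eq.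
Qed.

Lemma supp_size_pad_left : supp_size (pad_left D) = supp_size D.
Proof.
rewrite /supp_size /supp_min /supp_max supp_cols_pad_left.
by case: supp_cols => //= c s; rewrite last_map subSS.
Qed.

Lemma space_label_pad_left c : space_label (pad_left D) c.+1 = space_label D c.
Proof.
rewrite /space_label /in_support /supp_min /supp_max supp_cols_pad_left.
case def_s: supp_cols => [//|c0 s] /=; rewrite last_map !ltnS.
case: ifP => // /andP[_ lt_c].
have lt_max : last c0 s < ncols D by apply: supp_cols_lt_ncols; rewrite def_s mem_last.
by rewrite !forest_label_pad_left -?leaves_eq //; rewrite /ncols in lt_max; lia.
Qed.

Lemma left_space_label_pad_left : left_space_label (pad_left D) = left_space_label D.
Proof.
rewrite /left_space_label -[tree_start _ _]/(tree_start (top D) (tptr D)).+1.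
case: (tree_start _ _) => [|s]; last exact: space_label_pad_left.
rewrite /space_label /in_support /supp_min /supp_max supp_cols_pad_left.
by case: supp_cols.
Qed.

Lemma ell_pad_left : ell (pad_left D) = ell D.
Proof.
rewrite /ell /ell0 /supp_min /supp_max supp_cols_pad_left; congr (_ + _).
case def_s: supp_cols => [//|c0 s] /=; rewrite last_map /index_iota subSS -[c0.+1]/(1 + c0) iotaDl.
rewrite -map_comp; congr sumn; apply/eq_in_map => c; rewrite mem_iota => /andP[_ lt_c] /=.
have lt_min : c0 < ncols D by apply: supp_cols_lt_ncols; rewrite def_s mem_head.
have lt_max : last c0 s < ncols D by apply: supp_cols_lt_ncols; rewrite def_s mem_last.
by rewrite add1n !forest_label_pad_left -?leaves_eq //; rewrite /ncols in lt_min lt_max; lia.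
Qed.

End PadLeft.

Theorem corollary4p3p4 (D : fdiag) :
  wf_fdiag D -> reduced D ->
  (ell (x0inv D) < ell D) <->
  [\/ supp_size (x0inv D) < supp_size D,
      left_space_label D = Some (LabL, LabL)
    | left_space_label D = Some (LabL, LabI) /\ current_tree D = Leaf].
Proof.
move=> wfD _; case: (posnP (tptr D)) => [tptr0 | tptr_gt0]; last exact: ell_x0inv_ltP_tptr_gt0.
move: (wfD) => /and3P[/eqP leaves_eq lt_bp lt_tp].
have x0inv_pad : x0inv (pad_left D) = x0inv D by case: D tptr0 {wfD leaves_eq lt_bp lt_tp} => ? ? ? [].
have wf_pad : wf_fdiag (pad_left D).
  by rewrite /wf_fdiag /= /forest_leaves /= -!/(forest_leaves _) leaves_eq eqxx !ltnS lt_bp lt_tp.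
rewrite -(ell_pad_left leaves_eq) -(supp_size_pad_left leaves_eq) -(left_space_label_pad_left leaves_eq).
rewrite -[current_tree D]/(current_tree (pad_left D)) -x0inv_pad.
exact: ell_x0inv_ltP_tptr_gt0.
Qed.
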